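(* Any protocol $P$ among $n$ players that achieves sender anonymity and is resistant against collusions of any $t<n-1$ players, where the only resources available are pairwise shared secret key bits, a reliable broadcast channel and public communication, uses at least $n(n-1)/2$ bits of pairwise shared key; i.e. its key-sharing graph must be the complete graph on $n$ nodes.
   Context: The key-sharing graph of the protocol is the undirected graph $G=(V,E)$ whose nodes are the players, with an edge between nodes $i$ and $j$ iff $i$ and $j$ share one bit of secret key; the number of pairwise shared key bits is $|E|$. Sender anonymity against collusions of $t$ players: for an adversary corrupting a set of $t$ players not including the sender $s$ and observing all communication $C$ and the randomness $G^t$ of the corrupted players, $\max_S\Pr[S=s\mid G^t,C]=\max_S\Pr[S=s]=1/(n-t)$, maximum over random variables $S$ depending only on $C$ and $G^t$. *)

(* Model of classical anonymous-broadcast protocols whose only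
   resources are pairwise shared secret key bits (one per edge of the
   key-sharing graph), private local randomness, and a reliable public
   broadcast channel.  Adversary: passive coalition T of players. *)
From HB Require Import structures.
From mathcomp Require Import all_boot all_order all_algebra.
Set Implicit Arguments.
Unset Strict Implicit.
Unset Printing Implicit Defensive.
Import Order.TTheory GRing.Theory Num.Theory.
Local Open Scope ring_scope.

Definition simple_graph (n : nat) (G : rel 'I_n) : Prop :=
  symmetric G /\ irreflexive G.

(* Edges of G as unordered pairs {i,j} with i < j: |E| = number of key bits. *)
Definition edges (n : nat) (G : rel 'I_n) : {set 'I_n * 'I_n} :=
  [set e : 'I_n * 'I_n | (e.1 < e.2)%N && G e.1 e.2].

(* A global key assignment: the bit shared by i < j is stored at k i j
   (other entries are never used). Keys are uniformly distributed. *)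
Definition Key (n : nat) := {ffun 'I_n -> {ffun 'I_n -> bool}}.

Definition key_view (n : nat) (G : rel 'I_n) (k : Key n) (i : 'I_n)
  : {ffun 'I_n -> bool} :=
  [ffun j => if G i j then (if (i < j)%N then k i j else k j i) else false].

(* Public transcript of an nR-round protocol: entry r is the vector of the
   messages broadcast by all players in round r (None = not yet happened). *)
Definition Hist (n : nat) (Msg : finType) (nR : nat) :=
  {ffun 'I_nR -> option {ffun 'I_n -> Msg}}.

(* A protocol: in round r, player i broadcasts a message that depends on its
   input (Some m if i is the sender with message bit m, None otherwise), its
   key bits, its private randomness and the public history so far. *)
Record protocol (n : nat) (Rnd Msg : finType) (nR : nat) := Protocol {
  next : 'I_n -> 'I_nR -> option bool -> {ffun 'I_n -> bool} -> Rnd ->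
         Hist n Msg nR -> Msg;
  decode : Hist n Msg nR -> bool }.

Definition hist_upd (n : nat) (Msg : finType) (nR : nat) (h : Hist n Msg nR)
  (r : 'I_nR) (x : {ffun 'I_n -> Msg}) : Hist n Msg nR :=
  [ffun r' => if r' == r then Some x else h r'].

Definition run (n : nat) (Rnd Msg : finType) (nR : nat) (G : rel 'I_n)
  (P : protocol n Rnd Msg nR) (s : 'I_n) (m : bool) (k : Key n)
  (rho : {ffun 'I_n -> Rnd}) : Hist n Msg nR :=
  foldl (fun h r => hist_upd h r
           [ffun i => next P i r (if i == s then Some m else None)
                                 (key_view G k i) (rho i) h])
        [ffun _ => None] (enum 'I_nR).

Definition is_dist (R : realFieldType) (A : finType) (p : A -> R) : Prop :=
  (forall x, 0 <= p x) /\ \sum_(x : A) p x = 1.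

Definition correct (R : realFieldType) (n : nat) (Rnd Msg : finType) (nR : nat)
  (G : rel 'I_n) (p : 'I_n -> Rnd -> R) (P : protocol n Rnd Msg nR) : Prop :=
  forall (s : 'I_n) (m : bool) (k : Key n) (rho : {ffun 'I_n -> Rnd}),
    (forall i, 0 < p i (rho i)) -> decode P (run G P s m k rho) = m.

(* What a coalition T sees: its keys and randomness (G^t), and the
   communication C. *)
Definition View (n : nat) (Rnd Msg : finType) (nR : nat) :=
  (Key n * {ffun 'I_n -> option Rnd} * Hist n Msg nR)%type.

Definition adv_view (n : nat) (Rnd Msg : finType) (nR : nat) (G : rel 'I_n)
  (P : protocol n Rnd Msg nR) (T : {set 'I_n}) (s : 'I_n) (m : bool)
  (k : Key n) (rho : {ffun 'I_n -> Rnd}) : View n Rnd Msg nR :=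
  ([ffun i => if i \in T then key_view G k i else [ffun _ => false]],
   [ffun i => if i \in T then Some (rho i) else None],
   run G P s m k rho).

Definition guess_prob (R : realFieldType) (n : nat) (Rnd Msg : finType)
  (nR : nat) (G : rel 'I_n) (p : 'I_n -> Rnd -> R) (P : protocol n Rnd Msg nR)
  (T : {set 'I_n}) (m : bool) (g : {ffun View n Rnd Msg nR -> 'I_n}) : R :=
  \sum_(s in ~: T) (#|~: T|%:R)^-1 *
    \sum_(k : Key n) \sum_(rho : {ffun 'I_n -> Rnd})
      (#|{: Key n}|%:R)^-1 * (\prod_(i : 'I_n) p i (rho i)) *
      (g (adv_view G P T s m k rho) == s)%:R.

(* Sender anonymity against every collusion of t < n-1 players: the best
   guess from (G^t, C) is no better than the blind guess 1/(n-t). *)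
Definition anonymous (R : realFieldType) (n : nat) (Rnd Msg : finType)
  (nR : nat) (G : rel 'I_n) (p : 'I_n -> Rnd -> R) (P : protocol n Rnd Msg nR)
  : Prop :=
  forall (T : {set 'I_n}), (#|T| < n.-1)%N -> forall m : bool,
    \big[Order.max/0]_(g : {ffun View n Rnd Msg nR -> 'I_n})
        guess_prob G p P T m g
      = (#|~: T|%:R)^-1.

(* Suppose players i and j share no key and let the coalition T be all the
   other players. Every key bit of i or j is then shared with a member of T,
   so once the coalition's view is fixed, each player's consistency with the
   transcript is a condition on that player's own input and randomness only:
   the distribution W_a of the coalition's view under the input assignment a
   is a product of one factor per player. Hence, for the four assignments
   "i sends m", "j sends m", "both act as the sender of m" and "nobody
   sends", W_i W_j = W_both W_none pointwise. Anonymity against T forces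
   W_i = W_j, so W_i <= (W_both + W_none) / 2 by AM-GM. By correctness W_i
   has all its mass on transcripts decoding to m, and W_both has mass at most
   1 there, so W_none has mass at least 1 on transcripts decoding to m, for
   both values of m: impossible for a probability distribution. *)

From Pilot Require Import Defs.
From mathcomp Require Import all_boot all_order all_algebra lra.
Import Order.TTheory GRing.Theory Num.Theory.
Set Implicit Arguments.
Unset Strict Implicit.
Unset Printing Implicit Defensive.

Section Execution.
Variables (n : nat) (Rnd Msg : finType) (nR : nat) (P : protocol n Rnd Msg nR).

Definition hist_prefix (t : Hist n Msg nR) (k : nat) : Hist n Msg nR :=
  [ffun r : 'I_nR => if (r < k)%N then t r else None].

Lemma hist_prefix_full (t : Hist n Msg nR) : hist_prefix t nR = t.
Proof. by apply/ffunP => r; rewrite ffunE ltn_ord. Qed.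

Definition player_consistent (x : 'I_n) (a : option bool) (b : {ffun 'I_n -> bool})
  (c : Rnd) (t : Hist n Msg nR) : bool :=
  [forall r : 'I_nR,
     if t r is Some y then y x == Defs.next P x r a b c (hist_prefix t r) else false].

Variables (inp : 'I_n -> option bool) (kv : 'I_n -> {ffun 'I_n -> bool})
  (rho : {ffun 'I_n -> Rnd}).

Definition round_msgs (r : 'I_nR) (h : Hist n Msg nR) : {ffun 'I_n -> Msg} :=
  [ffun x => Defs.next P x r (inp x) (kv x) (rho x) h].

Definition exec_upto (k : nat) : Hist n Msg nR :=
  foldl (fun h r => hist_upd h r (round_msgs r h)) [ffun _ => None]
        (take k (enum 'I_nR)).

Definition exec : Hist n Msg nR :=
  foldl (fun h r => hist_upd h r (round_msgs r h)) [ffun _ => None] (enum 'I_nR).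

Definition round_consistent (t : Hist n Msg nR) : Prop :=
  forall r : 'I_nR, t r = Some (round_msgs r (hist_prefix t r)).

Lemma exec_upto0 : exec_upto 0 = [ffun _ => None].
Proof. by rewrite /exec_upto take0. Qed.

Lemma exec_uptoS k (lt_kn : (k < nR)%N) (r := Ordinal lt_kn) :
  exec_upto k.+1 = hist_upd (exec_upto k) r (round_msgs r (exec_upto k)).
Proof.
rewrite /exec_upto (take_nth r) ?size_enum_ord // foldl_rcons.
by rewrite (_ : nth r _ k = r) //; apply: val_inj; rewrite /= nth_enum_ord.
Qed.

Lemma exec_upto_ge k (r : 'I_nR) : (k <= r)%N -> exec_upto k r = None.
Proof.
elim: k => [|k IH] le_kr; first by rewrite exec_upto0 ffunE.
rewrite (exec_uptoS (ltn_trans le_kr (ltn_ord r))) ffunE.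
case: eqP => [/(congr1 val) /= eq_rk|_]; last exact: IH (ltnW le_kr).
by exfalso; move: (ltn_eqF le_kr) => /negbT/negP; apply; rewrite eq_rk.
Qed.

Lemma hist_prefix_exec_upto j k :
  (j <= k <= nR)%N -> hist_prefix (exec_upto k) j = exec_upto j.
Proof.
elim: k => [|k IH] /andP[le_jk le_kn].
  rewrite leqn0 in le_jk; rewrite (eqP le_jk) exec_upto0.
  by apply/ffunP => r; rewrite !ffunE.
move: le_jk; rewrite leq_eqVlt ltnS => /predU1P[->|le_jk].
  by apply/ffunP => r; rewrite ffunE; case: ltnP => [|/exec_upto_ge ->].
rewrite (exec_uptoS le_kn) -IH; last by rewrite le_jk ltnW.
apply/ffunP => r; rewrite !ffunE; case: ifP => [lt_rj|]; last by [].
case: eqP => [/(congr1 val) /= eq_rk|]; last by [].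
by exfalso; move: (leq_trans lt_rj le_jk); rewrite eq_rk ltnn.
Qed.
Lemma exec_uptoE : exec_upto nR = exec.
Proof. by rewrite /exec_upto take_oversize ?size_enum_ord. Qed.

Lemma exec_round_consistent : round_consistent exec.
Proof.
move=> r; have le_rn : (r <= nR <= nR)%N by rewrite ltnW ?ltn_ord ?leqnn.
rewrite -exec_uptoE; have -> : exec_upto nR r = exec_upto r.+1 r.
  by rewrite -(@hist_prefix_exec_upto r.+1 nR) ?ffunE ?ltnSn ?ltn_ord ?leqnn.
rewrite (exec_uptoS (ltn_ord r)) ffunE.
have -> : Ordinal (ltn_ord r) = r by apply: val_inj.
by rewrite eqxx hist_prefix_exec_upto.
Qed.

Lemma round_consistent_unique t t' :
  round_consistent t -> round_consistent t' -> t = t'.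
Proof.
move=> Ht Ht'; rewrite -[t]hist_prefix_full -[t']hist_prefix_full.
suff prefix_eq k : hist_prefix t k = hist_prefix t' k by [].
elim: k => [|k IH]; first by apply/ffunP => r; rewrite !ffunE.
apply/ffunP => r; rewrite !ffunE ltnS leq_eqVlt.
case: eqP => [eq_rk|_] /=; last by move/ffunP: IH => /(_ r); rewrite !ffunE.
by rewrite Ht Ht' eq_rk IH.
Qed.

(* [x0] only rules out [n = 0], where the right-hand side holds vacuously. *)
Lemma exec_eqE (x0 : 'I_n) t :
  (exec == t) = [forall x, player_consistent x (inp x) (kv x) (rho x) t].
Proof.
apply/eqP/forallP => [<- x|t_cons].
  by apply/forallP => r; rewrite exec_round_consistent ffunE.
apply: round_consistent_unique exec_round_consistent _ => r.
case t_r: (t r) => [y|]; last by have /forallP/(_ r) := t_cons x0; rewrite t_r.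
congr Some; apply/ffunP => x; rewrite ffunE.
by have /forallP/(_ r) := t_cons x; rewrite t_r => /eqP.
Qed.

End Execution.

Local Open Scope ring_scope.

Lemma natr_forall (R : comPzSemiRingType) (I : finType) (Q : pred I) :
  [forall x, Q x]%:R = \prod_x (Q x)%:R :> R.
Proof.
have [all_Q|/forallPn[x Qx]] := boolP [forall x, Q x].
  by rewrite big1 // => x _; rewrite (forallP all_Q x).
by rewrite (bigD1 x) //= (negbTE Qx) mul0r.
Qed.

Lemma ler_AGM2 (R : realFieldType) (q a b : R) :
  0 <= q -> 0 <= a -> 0 <= b -> q * q = a * b -> 2 * q <= a + b.
Proof.
move=> q_ge0 a_ge0 b_ge0 qq_ab; rewrite leNgt; apply/negP => lt_ab_q.
have : (a + b) * (a + b) < (2 * q) * (2 * q) by apply: ltr_pM; lra.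
have : 0 <= (a - b) ^+ 2 := sqr_ge0 _.
nra.
Qed.

Lemma eq_of_ler_sum (R : numDomainType) (I : finType) (f g : I -> R) :
  (forall v, f v <= g v) -> \sum_v g v <= \sum_v f v -> f =1 g.
Proof.
move=> le_fg le_sum v; apply/eqP; rewrite eq_sym -subr_eq0; apply/eqP.
have sub_ge0 w : true -> 0 <= g w - f w by rewrite subr_ge0.
have /eqP/(psumr_eq0P sub_ge0) -> // : \sum_w (g w - f w) == 0.
by rewrite eq_le (sumr_ge0 _ sub_ge0) andbT sumrB subr_le0.
Qed.

Lemma eq_of_sum_max_le1 (R : realDomainType) (I : finType) (f g : I -> R) :
  \sum_v f v = 1 -> \sum_v g v = 1 -> \sum_v Num.max (f v) (g v) <= 1 -> f =1 g.
Proof.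
move=> sum_f sum_g sum_max v.
have le_f w : f w <= Num.max (f w) (g w) by rewrite le_max lexx.
have le_g w : g w <= Num.max (f w) (g w) by rewrite le_max lexx orbT.
transitivity (Num.max (f v) (g v)).
  by apply: (eq_of_ler_sum le_f); rewrite sum_f.
by symmetry; apply: (eq_of_ler_sum le_g); rewrite sum_g.
Qed.

Section ViewDistribution.
Variables (R : realFieldType) (n : nat) (G : rel 'I_n) (Rnd Msg : finType)
  (nR : nat) (p : 'I_n -> Rnd -> R) (P : protocol n Rnd Msg nR)
  (T : {set 'I_n}).

Definition coalition_keys (k : Key n) : {ffun 'I_n -> {ffun 'I_n -> bool}} :=
  [ffun x => if x \in T then key_view G k x else [ffun _ => false]].

Definition coalition_rnd (rho : {ffun 'I_n -> Rnd}) : {ffun 'I_n -> option Rnd} :=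
  [ffun x => if x \in T then Some (rho x) else None].

Definition view (inp : 'I_n -> option bool) (k : Key n) (rho : {ffun 'I_n -> Rnd})
  : View n Rnd Msg nR :=
  (coalition_keys k, coalition_rnd rho, exec P inp (key_view G k) rho).

Definition sender_input (s : 'I_n) (m : bool) (x : 'I_n) : option bool :=
  if x == s then Some m else None.

Definition weight (k : Key n) (rho : {ffun 'I_n -> Rnd}) : R :=
  (#|{: Key n}|%:R)^-1 * \prod_x p x (rho x).

Definition view_dist (inp : 'I_n -> option bool) (v : View n Rnd Msg nR) : R :=
  \sum_(k : Key n) \sum_(rho : {ffun 'I_n -> Rnd})
    weight k rho * (view inp k rho == v)%:R.

Lemma sum_weight_view inp (F : View n Rnd Msg nR -> R) :
  \sum_(k : Key n) \sum_(rho : {ffun 'I_n -> Rnd}) weight k rho * F (view inp k rho)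
  = \sum_v F v * view_dist inp v.
Proof.
under [RHS]eq_bigr => v _ do rewrite big_distrr /=; rewrite [RHS]exchange_big /=.
apply: eq_bigr => k _; under [RHS]eq_bigr => v _ do rewrite big_distrr /=.
rewrite [RHS]exchange_big /=; apply: eq_bigr => rho _.
rewrite (bigD1 (view inp k rho)) //= eqxx mulr1 big1 ?addr0 1?mulrC //.
by move=> v /negbTE; rewrite eq_sym => ->; rewrite !mulr0.
Qed.

Hypothesis p_dist : forall x, is_dist (p x).

Lemma weight_ge0 k rho : 0 <= weight k rho.
Proof.
rewrite mulr_ge0 ?invr_ge0 ?ler0n //.
by apply: prodr_ge0 => x _; case: (p_dist x).
Qed.

Lemma sum_weight : \sum_(k : Key n) \sum_(rho : {ffun 'I_n -> Rnd}) weight k rho = 1.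
Proof.
have sum_rnd : \sum_(rho : {ffun 'I_n -> Rnd}) \prod_x p x (rho x) = 1.
  by rewrite -bigA_distr_bigA big1 // => x _; case: (p_dist x).
under eq_bigr => k _ do rewrite -big_distrr /= sum_rnd mulr1.
rewrite sumr_const -[_^-1 *+ _]mulr_natr mulVf // pnatr_eq0 -lt0n.
by apply/card_gt0P; exists [ffun _ => [ffun _ => false]].
Qed.

Lemma view_dist_ge0 inp v : 0 <= view_dist inp v.
Proof.
by apply: sumr_ge0 => k _; apply: sumr_ge0 => rho _; rewrite mulr_ge0 ?weight_ge0.
Qed.

Lemma sum_view_dist inp : \sum_v view_dist inp v = 1.
Proof.
transitivity (\sum_v 1 * view_dist inp v).
  by apply: eq_bigr => v _; rewrite mul1r.
rewrite -sum_weight_view -[RHS]sum_weight.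
by under eq_bigr do under eq_bigr do rewrite mulr1.
Qed.

(* A player outside T has each of its key bits stored in the view of its
   partner y, which lies in T whenever [coalition_knows_keys] holds. *)
Definition key_view_from (K : {ffun 'I_n -> {ffun 'I_n -> bool}}) (x : 'I_n)
  : {ffun 'I_n -> bool} :=
  if x \in T then K x else [ffun y => K y x].

Definition coalition_knows_keys : Prop :=
  forall k x, key_view G k x = key_view_from (coalition_keys k) x.

Definition key_factor (v : View n Rnd Msg nR) : R :=
  (#|{: Key n}|%:R)^-1 * \sum_(k : Key n) (coalition_keys k == v.1.1)%:R.

Definition player_factor (x : 'I_n) (a : option bool) (v : View n Rnd Msg nR) : R :=
  \sum_(c : Rnd) p x c *
    ((v.1.2 x == if x \in T then Some c else None) &&
     player_consistent P x a (key_view_from v.1.1 x) c v.2)%:R.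

(* With the coalition's keys fixed, what remains random are the players'
   private strings, which are independent. *)
Lemma view_dist_factor (x0 : 'I_n) (keys : coalition_knows_keys) inp v :
  view_dist inp v = key_factor v * \prod_x player_factor x (inp x) v.
Proof.
rewrite /view_dist /key_factor /player_factor bigA_distr_bigA -mulrA mulr_suml.
rewrite big_distrr /=; apply: eq_bigr => k _.
case: v => [[K rhoT] t] /=.
have [<-|neK] := eqVneq (coalition_keys k) K; last first.
  rewrite mul0r mulr0; apply: big1 => rho _.
  by rewrite /view !xpair_eqE (negbTE neK) mulr0.
rewrite mul1r big_distrr /=; apply: eq_bigr => rho _.
rewrite /weight -mulrA; congr (_ * _).
have rnd_eqE : (coalition_rnd rho == rhoT) =
    [forall x, rhoT x == if x \in T then Some (rho x) else None].
  apply/eqP/forallP => [<- x|rhoT_eq]; first by rewrite ffunE.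
  by apply/ffunP => x; rewrite ffunE; apply/esym/eqP.
rewrite /view !xpair_eqE eqxx rnd_eqE (exec_eqE _ _ _ _ x0).
rewrite big_split -natr_forall /=; congr (_ * (nat_of_bool _)%:R).
apply/idP/forallP => [/andP[/forallP rnd_ok /forallP cons_ok] x|ok].
  by rewrite rnd_ok -keys cons_ok.
by apply/andP; split; apply/forallP => x; have /andP[? ?] := ok x; rewrite ?keys.
Qed.

Lemma view_dist_mix (x0 : 'I_n) (keys : coalition_knows_keys) a b c d v :
  (forall x, (a x = c x /\ b x = d x) \/ (a x = d x /\ b x = c x)) ->
  view_dist a v * view_dist b v = view_dist c v * view_dist d v.
Proof.
move=> swap; rewrite !(view_dist_factor x0 keys) mulrACA [RHS]mulrACA -!big_split.
congr (_ * _); apply: eq_bigr => x _.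
by case: (swap x) => -[-> ->]; last exact: mulrC.
Qed.

Lemma correct_decode_mass (P_correct : correct G p P) s m :
  \sum_v view_dist (sender_input s m) v * (decode P v.2 == m)%:R = 1.
Proof.
under eq_bigr do rewrite mulrC.
rewrite -sum_weight_view -[RHS]sum_weight.
apply: eq_bigr => k _; apply: eq_bigr => rho _.
have [rho_pos|/forallPn[x rho_x]] := boolP [forall x, 0 < p x (rho x)].
  have -> : decode P (view (sender_input s m) k rho).2 = m.
    exact: P_correct (forallP rho_pos).
  by rewrite eqxx mulr1.
have p_rho_x : p x (rho x) = 0.
  by apply/eqP; rewrite eq_le leNgt rho_x; case: (p_dist x) => ->.
by rewrite /weight (bigD1 x) //= p_rho_x !(mul0r, mulr0).
Qed.

End ViewDistribution.

Section NonEdge.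
Variables (R : realFieldType) (n : nat) (G : rel 'I_n) (Rnd Msg : finType)
  (nR : nat) (p : 'I_n -> Rnd -> R) (P : protocol n Rnd Msg nR) (i j : 'I_n).
Hypotheses (G_simple : simple_graph G) (p_dist : forall x, is_dist (p x)).
Hypotheses (neq_ij : i != j) (nonedge_ij : ~~ G i j).

Local Notation T := (~: [set i; j]).
Local Notation W := (view_dist G p P T).

Lemma nonedge_coalition_knows_keys : coalition_knows_keys G T.
Proof.
case: G_simple => G_sym G_irr k x; rewrite /key_view_from.
have [xT|xNT] := boolP (x \in T); first by rewrite ffunE xT.
apply/ffunP => y; rewrite !ffunE.
have [yT|yNT] := boolP (y \in T).
  rewrite /key_view ffunE (G_sym y x); case: (G x y) => //.
  by case: ltngtP => // /val_inj ->.
rewrite ffunE; move: xNT yNT; rewrite !inE !negbK => /orP[]/eqP-> /orP[]/eqP->;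
  by rewrite ?eqxx ?G_irr ?(negbTE nonedge_ij) // G_sym (negbTE nonedge_ij).
Qed.

Lemma guess_probE m (g : {ffun View n Rnd Msg nR -> 'I_n}) :
  guess_prob G p P T m g =
  2^-1 * \sum_v ((g v == i)%:R * W (sender_input i m) v +
                 (g v == j)%:R * W (sender_input j m) v).
Proof.
rewrite /guess_prob setCK cards2 neq_ij big_setU1 ?inE //= big_set1 -mulrDr.
by rewrite big_split -!sum_weight_view.
Qed.

Lemma anonymous_sender_dist_eq (P_anon : anonymous G p P) m :
  W (sender_input i m) =1 W (sender_input j m).
Proof.
have small_T : (#|T| < n.-1)%N.
  have := cardsC T; rewrite setCK cards2 neq_ij card_ord => n_eq.
  by rewrite -[X in (_ < X.-1)%N]n_eq addn2.
(* The maximum-likelihood guess between i and j. *)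
pose guess : {ffun View n Rnd Msg nR -> 'I_n} :=
  [ffun v => if W (sender_input j m) v < W (sender_input i m) v then i else j].
have := le_bigmax 0 (guess_prob G p P T m) guess.
rewrite P_anon // setCK cards2 neq_ij guess_probE -[X in _ <= X]mulr1.
rewrite ler_pM2l ?invr_gt0 //.
set Wi := W (sender_input i m); set Wj := W (sender_input j m).
have -> : \sum_v ((guess v == i)%:R * Wi v + (guess v == j)%:R * Wj v) =
          \sum_v Num.max (Wi v) (Wj v).
  apply: eq_bigr => v _; rewrite ffunE maxEgt.
  case: ifP => _; rewrite eqxx ?(negbTE neq_ij) 1?eq_sym ?(negbTE neq_ij);
  by rewrite !(mul1r, mul0r, addr0, add0r).
by apply: eq_of_sum_max_le1; rewrite (sum_view_dist G P T p_dist).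
Qed.
Lemma silent_decode_mass_ge1 (P_correct : correct G p P) (P_anon : anonymous G p P) m :
  1 <= \sum_v W (fun=> None) v * (decode P v.2 == m)%:R.
Proof.
pose both x := if (x == i) || (x == j) then Some m else None.
pose A (v : View n Rnd Msg nR) : R := (decode P v.2 == m)%:R.
have rect v :
    W (sender_input i m) v * W (sender_input i m) v = W both v * W (fun=> None) v.
  rewrite {2}(anonymous_sender_dist_eq P_anon m v).
  apply: (view_dist_mix p P i nonedge_coalition_knows_keys) => x.
  rewrite /sender_input /both; case: (eqVneq x i) => [->|_].
    by left; rewrite (negbTE neq_ij).
  by case: (x == j); [right | left].
have AGM v :
    2 * (W (sender_input i m) v * A v) <= W both v * A v + W (fun=> None) v * A v.
  by rewrite -mulrDl mulrA ler_wpM2r ?ler0n // ler_AGM2 ?view_dist_ge0.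
have both_le1 : \sum_v W both v * A v <= 1.
  rewrite -(sum_view_dist G P T p_dist both); apply: ler_sum => v _.
  by rewrite ler_piMr ?view_dist_ge0 // /A; case: (_ == _).
have : \sum_v 2 * (W (sender_input i m) v * A v) <=
       \sum_v (W both v * A v + W (fun=> None) v * A v).
  by apply: ler_sum => v _; exact: AGM.
rewrite -mulr_sumr (correct_decode_mass T p_dist P_correct) big_split /=.
rewrite /A in both_le1 *; lra.
Qed.

Lemma nonedge_contradiction (P_correct : correct G p P) (P_anon : anonymous G p P) :
  False.
Proof.
have mass_true := silent_decode_mass_ge1 P_correct P_anon true.
have mass_false := silent_decode_mass_ge1 P_correct P_anon false.
have : \sum_v W (fun=> None) v * (decode P v.2 == true)%:R +
       \sum_v W (fun=> None) v * (decode P v.2 == false)%:R = 1.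
  rewrite -big_split -[RHS](sum_view_dist G P T p_dist (fun=> None)).
  by apply: eq_bigr => v _; case: (decode P v.2); rewrite /= mulr1 mulr0 ?addr0 ?add0r.
lra.
Qed.

End NonEdge.

Lemma anonymous_key_graph_complete (R : realFieldType) (n : nat) (G : rel 'I_n)
  (Rnd Msg : finType) (nR : nat) (p : 'I_n -> Rnd -> R) (P : protocol n Rnd Msg nR) :
  simple_graph G -> (forall i, is_dist (p i)) -> correct G p P -> anonymous G p P ->
  forall i j : 'I_n, i != j -> G i j.
Proof.
move=> G_simple p_dist P_correct P_anon i j neq_ij; apply/negPn/negP => nonedge_ij.
exact: (nonedge_contradiction G_simple p_dist neq_ij nonedge_ij P_correct P_anon).
Qed.

Lemma card_ltn_pairs (n : nat) :
  #|[set e : 'I_n * 'I_n | (e.1 < e.2)%N]| = 'C(n, 2).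
Proof.
rewrite -sum1_card (eq_bigl (fun e : 'I_n * 'I_n => (e.1 < e.2)%N)) => [|e]; last first.
  by rewrite inE.
rewrite -(pair_big_dep xpredT (fun a b : 'I_n => (a < b)%N) (fun _ _ => 1%N)) /=.
under eq_bigr => a _ do rewrite big_mkcond /=.
rewrite exchange_big /= -bin2_sum big_mkord; apply: eq_bigr => b _.
rewrite -big_mkcond /= -(big_ord_widen_cond _ xpredT (fun=> 1%N) (ltnW (ltn_ord b))).
by rewrite sum1_card card_ord.
Qed.

Lemma card_edges_complete (n : nat) (G : rel 'I_n) :
  (forall i j : 'I_n, i != j -> G i j) -> #|edges G| = 'C(n, 2).
Proof.
move=> G_complete; rewrite -card_ltn_pairs; apply: eq_card => e; rewrite !inE.
by case: ltngtP => //= lt_e; rewrite G_complete // neq_ltn lt_e.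
Qed.

Theorem mainTheorem5 (R : realFieldType) (n : nat) (G : rel 'I_n)
  (Rnd Msg : finType) (nR : nat) (p : 'I_n -> Rnd -> R)
  (P : protocol n Rnd Msg nR) :
  simple_graph G ->
  (forall i, is_dist (p i)) ->
  correct G p P ->
  anonymous G p P ->
  (forall i j : 'I_n, i != j -> G i j) /\
  ((n * n.-1)./2 <= #|edges G|)%N.
Proof.
move=> G_simple p_dist P_correct P_anon.
have G_complete := anonymous_key_graph_complete G_simple p_dist P_correct P_anon.
by split; last by rewrite card_edges_complete // bin2.
Qed.
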